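(* Let $X_m$ be a space of labelled lines and let $T_n$ be an $n$-rule map on $X_m$ with defining rule sequence $r_1,\dots,r_n$, $r_i=r(\,\cdot\,;\theta_i,o_i,L_{a_i})$, and let $c_1,\dots,c_n$ be the similarity coefficients of the rules and $C=c_1c_2\cdots c_n$ the similarity coefficient of the induced map $\hat T_n=T_n^n$. If $0\le C<1$, then $T_n$ admits a unique periodic orbit of period $n$.
   Context: $X_m\subset\mathbb{R}^2$ is a union of $m\ge3$ lines, labelled $L_1,\dots,L_m$, not all concurrent, with at least one line neither parallel nor perpendicular to any other. For a point $x$ on a line of $X_m$, a line $L_j$ of $X_m$, and $\theta\in(0,\pi/2)$, there are two lines through $x$ meeting $L_j$ at angle $\theta$; their intersection points with $L_j$ are the orientation $0$ and orientation $1$, angle $\theta$ projections of $x$ onto $L_j$ (the labels $0,1$ being assigned by the fixed convention ''left'' and ''right'' projection as seen from $x$, under which, for fixed $\theta$ and orientation, the projection from one line onto another is a projection along a fixed direction); for $\theta=\pi/2$ there is a single (perpendicular) projection; if $x\in L_j$ its projection is $x$. A rule $r(x;\theta,o,L_j)$ maps $x\in X_m$ to its angle $\theta$, orientation $o$ projection onto $L_j$ ($\theta\in(0,\pi/2]$, $o\in\{0,1\}$). A rule sequence is a sequence of $n\ge m$ rules $r_1,\dots,r_n$ such that consecutive rules, including $r_n$ and $r_1$, map onto different lines, and every line of $X_m$ is mapped onto by at least one rule. The $n$-rule map $T_n:X_m\to X_m$ is iterated by cycling through the rules: the $k$-th iterate applies $r_{((k-1)\bmod n)+1}$ to the $(k-1)$-th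 iterate, so e.g. $T_n^{n+2}(x)=r_2(r_1(r_n(\cdots r_2(r_1(x)))))$. $T_n$ is assumed non-redundant (there is no rule sequence of length $n'$ with $m\le n'<n$ giving the same orbits for all $x$). The orbit of $x$ is $\{x,T_n(x),T_n^2(x),\dots\}$. With $a_0:=a_n$, the restriction of $r_i$ to $L_{a_{i-1}}$ (mapping into $L_{a_i}$) satisfies $d(r_i(x),r_i(y))=c_i\,d(x,y)$ for all $x,y\in L_{a_{i-1}}$, for a constant $c_i\ge0$ ($d$ the Euclidean metric); $c_i$ is the similarity coefficient of $r_i$. The induced map $\hat T_n=T_n^n$ maps $L_{a_n}$ to itself. *)

From Stdlib Require Import Reals Lra Lia Arith.
Open Scope R_scope.

Definition pt := (R * R)%type.

Definition padd (x y : pt) : pt := (fst x + fst y, snd x + snd y).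
Definition psub (x y : pt) : pt := (fst x - fst y, snd x - snd y).
Definition pscale (t : R) (x : pt) : pt := (t * fst x, t * snd x).
Definition cross (x y : pt) : R := fst x * snd y - snd x * fst y.
Definition dot (x y : pt) : R := fst x * fst y + snd x * snd y.
Definition dist (x y : pt) : R :=
  sqrt ((fst x - fst y) ^ 2 + (snd x - snd y) ^ 2).

Record line := mkLine { lbase : pt ; ldir : pt }.

Definition well_formed_line (l : line) : Prop := ldir l <> (0, 0).

Definition on_line (l : line) (x : pt) : Prop :=
  exists t : R, x = padd (lbase l) (pscale t (ldir l)).

Definition parallel (l1 l2 : line) : Prop := cross (ldir l1) (ldir l2) = 0.
Definition perpendicular (l1 l2 : line) : Prop := dot (ldir l1) (ldir l2) = 0.

Definition rot (th : R) (u : pt) : pt :=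
  (cos th * fst u - sin th * snd u, sin th * fst u + cos th * snd u).

(* Angle th, orientation o projection of x onto line l: intersection with l
   of the line through x with direction rot(th) u (o = false, "orientation 0")
   or rot(-th) u (o = true, "orientation 1"), u the direction of l.
   The unoriented projection direction does not depend on the sign of u
   nor on the side of l on which x lies, as in the paper's convention.
   For th = PI/2 both coincide with the perpendicular projection;
   if x lies on l, the result is x. *)
Definition proj (l : line) (th : R) (o : bool) (x : pt) : pt :=
  let u := ldir l in
  let v := if o then rot (- th) u else rot th u in
  padd (lbase l) (pscale (cross (psub x (lbase l)) v / cross u v) u).

(* a rule r(.; theta, o, L_a) ; lines are indexed 0..m-1 *)
Record rule := mkRule { rth : R ; ro : bool ; ra : nat }.

Definition apply_rule (L : nat -> line) (r : rule) (x : pt) : pt :=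
  proj (L (ra r)) (rth r) (ro r) x.

Definition inX (L : nat -> line) (m : nat) (x : pt) : Prop :=
  exists i, (i < m)%nat /\ on_line (L i) x.

Definition lines_space (L : nat -> line) (m : nat) : Prop :=
  (3 <= m)%nat /\
  (forall i, (i < m)%nat -> well_formed_line (L i)) /\
  (forall i j, (i < m)%nat -> (j < m)%nat -> i <> j ->
     exists x, on_line (L i) x /\ ~ on_line (L j) x) /\
  ~ (exists p, forall i, (i < m)%nat -> on_line (L i) p) /\
  (exists i, (i < m)%nat /\ forall j, (j < m)%nat -> j <> i ->
     ~ parallel (L i) (L j) /\ ~ perpendicular (L i) (L j)).

(* r 0, ..., r (n-1) is a rule sequence (0-indexed version of r_1..r_n) *)
Definition rule_sequence (m n : nat) (r : nat -> rule) : Prop :=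
  (m <= n)%nat /\
  (forall i, (i < n)%nat ->
     0 < rth (r i) <= PI / 2 /\ (ra (r i) < m)%nat) /\
  (forall i, (i < n)%nat -> ra (r i) <> ra (r ((i + 1) mod n))) /\
  (forall j, (j < m)%nat -> exists i, (i < n)%nat /\ ra (r i) = j).

Fixpoint Titer (L : nat -> line) (n : nat) (r : nat -> rule) (k : nat) (x : pt)
  : pt :=
  match k with
  | O => x
  | S k' => apply_rule L (r (k' mod n)) (Titer L n r k' x)
  end.

Definition in_orbit (L : nat -> line) (n : nat) (r : nat -> rule)
  (x y : pt) : Prop := exists k, y = Titer L n r k x.

Definition non_redundant (L : nat -> line) (m n : nat) (r : nat -> rule)
  : Prop :=
  ~ exists (n' : nat) (r' : nat -> rule),
      (m <= n')%nat /\ (n' < n)%nat /\ rule_sequence m n' r' /\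
      forall x, inX L m x ->
        forall y, in_orbit L n' r' x y <-> in_orbit L n r x y.

(* c i is the similarity coefficient of r i, restricted to the line
   L_{a_{i-1}} (indices cyclic, a_{-1} := a_{n-1}) *)
Definition similarity_coeffs (L : nat -> line) (n : nat) (r : nat -> rule)
  (c : nat -> R) : Prop :=
  forall i, (i < n)%nat ->
    0 <= c i /\
    forall x y,
      on_line (L (ra (r ((i + n - 1) mod n)))) x ->
      on_line (L (ra (r ((i + n - 1) mod n)))) y ->
      dist (apply_rule L (r i) x) (apply_rule L (r i) y) = c i * dist x y.

Fixpoint prodR (c : nat -> R) (n : nat) : R :=
  match n with
  | O => 1
  | S k => prodR c k * c k
  end.

(** Every projection is affine, so the induced map [T_n^n] is affine; it maps
    the whole plane onto the line [L_(a_n)] and scales distances on that line by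
    [C].  An affine self-map of a line with ratio of absolute value [C < 1] has
    exactly one fixed point, and every fixed point of [T_n^n] lies on that line. *)
From Pilot Require Import Defs.
From Stdlib Require Import Reals Lra Lia Arith.
Open Scope R_scope.

Definition affine_comb (s : R) (x y : pt) : pt := padd x (pscale s (psub y x)).

Definition line_pt (l : line) (t : R) : pt := padd (lbase l) (pscale t (ldir l)).

Lemma on_line_pt l t : on_line l (line_pt l t).
Proof. exists t; reflexivity. Qed.

Lemma affine_comb_line_pt l s a b :
  affine_comb s (line_pt l a) (line_pt l b) = line_pt l (a + s * (b - a)).
Proof.
  destruct l as [[b1 b2] [u1 u2]].
  unfold affine_comb, line_pt, padd, pscale, psub; simpl; f_equal; ring.
Qed.

Lemma dist_line_pt l s t :
  Defs.dist (line_pt l s) (line_pt l t) = Rabs (s - t) * sqrt (dot (ldir l) (ldir l)).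
Proof.
  destruct l as [[b1 b2] [u1 u2]]; unfold Defs.dist, line_pt, padd, pscale, dot; simpl.
  replace ((b1 + s * u1 - (b1 + t * u1)) * ((b1 + s * u1 - (b1 + t * u1)) * 1) +
           (b2 + s * u2 - (b2 + t * u2)) * ((b2 + s * u2 - (b2 + t * u2)) * 1))
    with (Rsqr (s - t) * (u1 * u1 + u2 * u2)) by (unfold Rsqr; ring).
  rewrite sqrt_mult, sqrt_Rsqr_abs by (try apply Rle_0_sqr; nra).
  reflexivity.
Qed.

Lemma well_formed_line_norm_pos l :
  well_formed_line l -> 0 < sqrt (dot (ldir l) (ldir l)).
Proof.
  destruct l as [b [u1 u2]]; unfold well_formed_line, dot; simpl; intro Hu.
  apply sqrt_lt_R0.
  destruct (Req_dec u1 0) as [-> | H1]; [destruct (Req_dec u2 0) as [-> | H2] |].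
  - now exfalso; apply Hu.
  - nra.
  - nra.
Qed.

Lemma dist_eq0 x y : Defs.dist x y = 0 -> x = y.
Proof.
  destruct x as [x1 x2], y as [y1 y2]; unfold Defs.dist; simpl; intro H.
  pose proof (Rle_0_sqr (x1 - y1)); pose proof (Rle_0_sqr (x2 - y2)); unfold Rsqr in *.
  apply sqrt_eq_0 in H; [| nra].
  f_equal; nra.
Qed.

Lemma dist_ge0 x y : 0 <= Defs.dist x y.
Proof. apply sqrt_pos. Qed.

Section AffineContraction.

Variables (l : line) (G : pt -> pt) (C : R).
Hypothesis G_affine : forall s x y, G (affine_comb s x y) = affine_comb s (G x) (G y).
Hypothesis G_into_line : forall x, on_line l x -> on_line l (G x).
Hypothesis G_scales : forall x y, on_line l x -> on_line l y ->
  Defs.dist (G x) (G y) = C * Defs.dist x y.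
Hypothesis C_lt1 : C < 1.

Lemma affine_contraction_fixpoint_unique x y :
  on_line l x -> on_line l y -> G x = x -> G y = y -> x = y.
Proof.
  intros Hx Hy Gx Gy; apply dist_eq0.
  pose proof (G_scales x y Hx Hy) as Hd; rewrite Gx, Gy in Hd.
  pose proof (dist_ge0 x y); nra.
Qed.

Lemma affine_contraction_fixpoint :
  well_formed_line l -> exists x, on_line l x /\ G x = x.
Proof.
  intro Hl.
  destruct (G_into_line _ (on_line_pt l 0)) as [g0 E0].
  destruct (G_into_line _ (on_line_pt l 1)) as [g1 E1].
  fold (line_pt l g0) in E0; fold (line_pt l g1) in E1.
  assert (G_param : forall t, G (line_pt l t) = line_pt l (g0 + t * (g1 - g0))).
  { intro t.
    replace (line_pt l t) with (affine_comb t (line_pt l 0) (line_pt l 1))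
      by (rewrite affine_comb_line_pt; f_equal; ring).
    now rewrite G_affine, E0, E1, affine_comb_line_pt. }
  assert (Hratio : Rabs (g0 - g1) = C).
  { pose proof (G_scales _ _ (on_line_pt l 0) (on_line_pt l 1)) as Hd.
    rewrite E0, E1, !dist_line_pt in Hd.
    replace (Rabs (0 - 1)) with 1 in Hd by (rewrite Rabs_left; lra).
    pose proof (well_formed_line_norm_pos l Hl); nra. }
  assert (Hd1 : 1 - (g1 - g0) <> 0).
  { intro H; rewrite Rabs_left in Hratio; lra. }
  exists (line_pt l (g0 / (1 - (g1 - g0)))); split; [apply on_line_pt |].
  rewrite G_param; f_equal; field; exact Hd1.
Qed.

End AffineContraction.

Lemma proj_affine_comb l th o s x y :
  proj l th o (affine_comb s x y) = affine_comb s (proj l th o x) (proj l th o y).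
Proof.
  destruct l as [[b1 b2] [u1 u2]], x as [x1 x2], y as [y1 y2].
  unfold proj, affine_comb, padd, pscale, psub, cross; destruct o; simpl;
    f_equal; unfold Rdiv; ring.
Qed.

Section RuleIterates.

Variables (L : nat -> line) (n : nat) (r : nat -> rule).

Lemma Titer_affine_comb k s x y :
  Titer L n r k (affine_comb s x y) =
  affine_comb s (Titer L n r k x) (Titer L n r k y).
Proof.
  induction k as [| k IHk]; simpl; [reflexivity |].
  rewrite IHk; apply proj_affine_comb.
Qed.

Lemma Titer_S_on_line k x : on_line (L (ra (r (k mod n)))) (Titer L n r (S k) x).
Proof. simpl; unfold apply_rule, proj; eexists; reflexivity. Qed.

Lemma Titer_n_on_line x :
  (0 < n)%nat -> on_line (L (ra (r (n - 1)))) (Titer L n r n x).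
Proof.
  intro Hn; replace n with (S (n - 1)) at 3 by lia.
  rewrite <- (Nat.mod_small (n - 1) n) at 1 by lia.
  apply Titer_S_on_line.
Qed.

Lemma Titer_on_line x k :
  (0 < n)%nat -> on_line (L (ra (r (n - 1)))) x ->
  on_line (L (ra (r ((k + n - 1) mod n)))) (Titer L n r k x).
Proof.
  intros Hn Hx; destruct k as [| k].
  - now rewrite Nat.mod_small by lia.
  - replace (S k + n - 1)%nat with (k + 1 * n)%nat by lia.
    rewrite Nat.Div0.mod_add; apply Titer_S_on_line.
Qed.

Lemma Titer_dist c k x y :
  (0 < n)%nat -> similarity_coeffs L n r c -> (k <= n)%nat ->
  on_line (L (ra (r (n - 1)))) x -> on_line (L (ra (r (n - 1)))) y ->
  Defs.dist (Titer L n r k x) (Titer L n r k y) = prodR c k * Defs.dist x y.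
Proof.
  intros Hn Hc Hk Hx Hy; induction k as [| k IHk]; simpl; [ring |].
  rewrite Nat.mod_small by lia.
  destruct (Hc k ltac:(lia)) as [_ Hsim].
  rewrite (Hsim _ _ (Titer_on_line x k Hn Hx) (Titer_on_line y k Hn Hy)), IHk by lia.
  ring.
Qed.

End RuleIterates.

Theorem theorem2 (L : nat -> line) (m n : nat) (r : nat -> rule)
  (c : nat -> R) :
  lines_space L m ->
  rule_sequence m n r ->
  non_redundant L m n r ->
  similarity_coeffs L n r c ->
  0 <= prodR c n < 1 ->
  exists x, inX L m x /\ Titer L n r n x = x /\
    forall y, inX L m y -> Titer L n r n y = y ->
      forall z, in_orbit L n r y z <-> in_orbit L n r x z.
Proof.
  intros [Hm [Hwf _]] [Hmn [Hrules _]] _ Hc [_ HC].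
  assert (Hn : (0 < n)%nat) by lia.
  set (j := ra (r (n - 1)%nat)).
  assert (Hj : (j < m)%nat) by (apply (Hrules (n - 1)%nat); lia).
  assert (Hdist : forall x y, on_line (L j) x -> on_line (L j) y ->
    Defs.dist (Titer L n r n x) (Titer L n r n y) = prodR c n * Defs.dist x y)
    by (intros; apply Titer_dist; auto).
  destruct (affine_contraction_fixpoint (L j) (Titer L n r n) (prodR c n)
              (Titer_affine_comb L n r n) (fun x _ => Titer_n_on_line L n r x Hn)
              Hdist HC (Hwf j Hj)) as [x [Hx Fx]].
  exists x; split; [exists j; auto | split; [exact Fx |]].
  intros y _ Fy z.
  assert (Hy : on_line (L j) y) by (rewrite <- Fy; apply Titer_n_on_line, Hn).
  now rewrite (affine_contraction_fixpoint_unique (L j) (Titer L n r n) (prodR c n)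
                 Hdist HC y x Hy Hx Fy Fx).
Qed.
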